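(* Let $k$ be a field and $A_k$ a $k$-algebra with a $k$-linear involution $a\mapsto a^*$. Let $E$ be a finite-dimensional $A_k$-module with a nondegenerate $k$-bilinear form $b$ satisfying $b(ax,y)=b(x,a^*y)$ for all $a\in A_k$, $x,y\in E$, where either $b$ is alternating, or $b$ is symmetric and $\mathrm{char}(k)\neq2$. Let $E^{\mathrm{ss}}$ be the semisimplification of the $A_k$-module $E$. Then there exists a bilinear form $b'$ on $E^{\mathrm{ss}}$, symmetric if $b$ is symmetric and alternating if $b$ is alternating, such that $b'(ax,y)=b'(x,a^*y)$ for all $a\in A_k$, $x,y\in E^{\mathrm{ss}}$, and such that $b'$ is isomorphic to $b$ as a $k$-bilinear form.
   Context: The semisimplification of a finite-length module is the direct sum of the successive quotients of a Jordan–Hölder filtration; it is well-defined up to isomorphism. *)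

From HB Require Import structures.
From mathcomp Require Import all_boot all_order all_algebra.
Set Implicit Arguments. Unset Strict Implicit. Unset Printing Implicit Defensive.
Import GRing.Theory.
Local Open Scope ring_scope.

Section Defs.
Variables (k : fieldType) (A : algType k).

Definition involution (star : A -> A) : Prop :=
  [/\ forall (c : k) (a b : A), star (c *: a + b) = c *: star a + star b,
      forall a : A, star (star a) = a &
      forall a b : A, star (a * b) = star b * star a].

Definition module_action (E : vectType k) (act : A -> 'End(E)) : Prop :=
  [/\ forall (c : k) (a b : A), act (c *: a + b) = c *: act a + act b,
      act 1 = \1%VF &
      forall a b : A, act (a * b) = (act a \o act b)%VF].

Definition submodule (E : vectType k) (act : A -> 'End(E)) (U : {vspace E}) : Prop :=
  forall (a : A) (x : E), x \in U -> act a x \in U.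

Definition simple_factor (E : vectType k) (act : A -> 'End(E)) (U V : {vspace E}) : Prop :=
  [/\ (U <= V)%VS, U != V &
      forall M : {vspace E}, submodule act M -> (U <= M)%VS -> (M <= V)%VS ->
        M = U \/ M = V].

(* (F, actF) is (isomorphic to) the semisimplification of (E, actE):
   there is a Jordan–Hölder filtration 0 = E_0 ⊊ E_1 ⊊ ... ⊊ E_r = E of E,
   and F is the internal direct sum of submodules F_0, ..., F_{r-1} with
   A-module isomorphisms E_{i+1}/E_i ≅ F_i, induced by linear maps
   phi_i : E_{i+1} -> F_i that are A-linear, onto, with kernel E_i. *)
Definition is_semisimplification (E F : vectType k)
    (actE : A -> 'End(E)) (actF : A -> 'End(F)) : Prop :=
  exists (r : nat) (Es : nat -> {vspace E}) (Fs : nat -> {vspace F})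
         (phi : nat -> 'Hom(E, F)),
  [/\ [/\ Es 0%N = 0%VS, Es r = fullv &
          forall i, (i <= r)%N -> submodule actE (Es i)],
      forall i, (i < r)%N -> simple_factor actE (Es i) (Es i.+1),
      forall i, (i < r)%N ->
        [/\ submodule actF (Fs i),
            (phi i @: Es i.+1)%VS = Fs i,
            (forall x, x \in Es i.+1 -> (phi i x = 0 <-> x \in Es i)) &
            (forall (a : A) x, x \in Es i.+1 -> phi i (actE a x) = actF a (phi i x))],
      (\sum_(i < r) Fs i)%VS = fullv &
      directv (\sum_(i < r) Fs i)].

Definition bilinear_form (E : vectType k) (b : E -> E -> k) : Prop :=
  (forall (c : k) x1 x2 y, b (c *: x1 + x2) y = c * b x1 y + b x2 y) /\
  (forall (c : k) x y1 y2, b x (c *: y1 + y2) = c * b x y1 + b x y2).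

Definition nondegenerate_bform (E : vectType k) (b : E -> E -> k) : Prop :=
  (forall x, (forall y, b x y = 0) -> x = 0) /\
  (forall y, (forall x, b x y = 0) -> y = 0).

Definition symmetric_bform (E : vectType k) (b : E -> E -> k) : Prop :=
  forall x y, b x y = b y x.

Definition alternating_bform (E : vectType k) (b : E -> E -> k) : Prop :=
  forall x, b x x = 0.

Definition compatible_form (E : vectType k) (act : A -> 'End(E)) (star : A -> A)
    (b : E -> E -> k) : Prop :=
  forall (a : A) x y, b (act a x) y = b x (act (star a) y).

Definition forms_isomorphic (E F : vectType k) (b : E -> E -> k) (b' : F -> F -> k) : Prop :=
  exists f : 'Hom(E, F), bijective (fun_of_lfun f) /\ forall x y, b' (f x) (f y) = b x y.

End Defs.

From HB Require Import structures.
From mathcomp Require Import all_boot all_order all_algebra sesquilinear ring.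
Set Implicit Arguments. Unset Strict Implicit. Unset Printing Implicit Defensive.
Import GRing.Theory.
Local Open Scope ring_scope.

(* Write E^ss = F_0 ⊕ ... ⊕ F_{r-1} with F_i ≅ E_{i+1}/E_i for a composition series
   0 = E_0 ⊂ ... ⊂ E_r = E.  It suffices to find linear lifts g_i : F_i -> E spanning E
   and compatible with b and the actions: then G = Σ g_i is bijective (the dimensions
   agree) and b' := b (G _) (G _) is the required form.

   The lifts are built by induction on dim V, for V nondegenerate with such a filtration.
   The first nonzero term L = E_{i0+1} is simple.  If L ∩ L^⊥ = 0 put H := L.  Otherwise
   L is totally isotropic; at the first step j with E_{j+1} ⊄ L^⊥ the factor E_{j+1}/E_j
   is dual to L, and since b is alternating or 2 is invertible, E_j has a totally
   isotropic complement L' in E_{j+1}; put H := L ⊕ L', which is nondegenerate.  Then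
   V = H ⊥ W with W := V ∩ H^⊥, and W models L^⊥/L: it carries the filtration E_i ∩ W
   (the steps at i0 and j become trivial) and the action followed by the projection
   along L.  Lifting F_{i0} onto L and F_j onto L' completes the lifts found for W. *)

Lemma lfun_of_linear (k : fieldType) (U V : vectType k) (f : U -> V) :
  linear f -> exists h : 'Hom(U, V), h =1 f.
Proof.
move=> linf; pose fL : {linear U -> V} := HB.pack f (GRing.isLinear.Build _ _ _ _ f linf).
by exists (linfun fL) => x; rewrite lfunE.
Qed.

Lemma lfun_inv_on (k : fieldType) (U V : vectType k) (f : 'Hom(U, V)) (X : {vspace U}) :
  (X :&: lker f = 0)%VS -> exists h : 'Hom(V, U), {in X, cancel f h}.
Proof.
move=> Xf0; pose g := (f \o projv X)%VF; exists (projv X \o g^-1)%VF => x Xx.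
have gx : g x = f x by rewrite comp_lfunE projv_id.
have ggx : f (projv X ((g^-1)%VF (f x))) = f x.
  by rewrite -[f (projv X _)]comp_lfunE -/g limg_lfunVK // -gx memv_img ?memvf.
apply/eqP; rewrite comp_lfunE -subr_eq0 -memv0 -Xf0 memv_cap memvB ?memv_proj //=.
by rewrite memv_ker linearB /= ggx subrr.
Qed.

Lemma memv_add_cap (k : fieldType) (V : vectType k) (U X W : {vspace V}) u w :
  (U <= X)%VS -> u \in U -> w \in W -> u + w \in X -> u + w \in (U + X :&: W)%VS.
Proof.
move=> sUX Uu Ww Xuw; rewrite memv_add // memv_cap Ww andbT.
by rewrite -(rpredDl _ (subvP sUX _ Uu)).
Qed.

Lemma graph_complement (k : fieldType) (V : vectType k) (E0 E1 C : {vspace V}) (tau : 'End(V)) :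
  (E0 + C = E1)%VS -> (C :&: E0 = 0)%VS -> (forall x, tau x \in E0) ->
  (E0 + (\1 + tau)%VF @: C = E1)%VS /\ ((\1 + tau)%VF @: C :&: E0 = 0)%VS.
Proof.
move=> E1C CE0 tauE0; set L' := ((\1 + tau)%VF @: C)%VS.
have L'P y : y \in L' -> exists2 c, c \in C & y = c + tau c.
  by case/memv_imgP=> c Cc ->; exists c; rewrite // add_lfunE id_lfunE.
split; last first.
  apply/eqP; rewrite -subv0; apply/subvP => y; rewrite memv_cap.
  case/andP=> /L'P[c Cc ->] E0y; have : c \in (C :&: E0)%VS.
    by rewrite memv_cap Cc -(addrK (tau c) c) memvB.
  by rewrite CE0 memv0 => /eqP ->; rewrite linear0 addr0 mem0v.
rewrite -E1C; apply/eqP; rewrite eqEsubv !subv_add !addvSl /=; apply/andP; split.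
  by apply/subvP => y /L'P[c Cc ->]; rewrite addrC memv_add.
apply/subvP => c Cc; rewrite -[c](addrK (tau c)) addrC memv_add ?memvN //.
have -> : c + tau c = (\1 + tau)%VF c by rewrite add_lfunE id_lfunE.
exact: memv_img.
Qed.

Lemma split_sign_matrix (k : fieldType) (eps : bool) m (M : 'M[k]_m) :
  (forall i j, M j i = (-1) ^+ eps * M i j) -> (forall i, M i i = 0) \/ (2 != 0 :> k) ->
  exists G : 'M[k]_m, forall i j, M i j = G i j + (-1) ^+ eps * G j i.
Proof.
move=> Msign Mdiag.
exists (\matrix_(i, j) if (i < j)%N then M i j else if i == j then M i i / 2 else 0).
move=> i j; rewrite !mxE; case: ltngtP => [lt_ij | lt_ji | /val_inj <-].
- by rewrite ifN ?mulr0 ?addr0 // neq_ltn lt_ij orbT.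
- by rewrite ifN ?neq_ltn ?lt_ji ?orbT // add0r (Msign i j) signrMK.
rewrite eqxx; case: Mdiag => [-> | two0]; first by rewrite mul0r mulr0 addr0.
case: eps Msign => Msign; last by rewrite /= mul1r; field.
have : M i i *+ 2 == 0 by rewrite mulr2n {1}Msign expr1 mulN1r addNr.
by rewrite -(mulr_natr (M i i)) mulf_eq0 (negPf two0) orbF => /eqP ->; rewrite mul0r mulr0 addr0.
Qed.

Section HermitianForm.
Variables (k : fieldType) (E : vectType k) (eps : bool).
Variable b : {hermitian E for eps & idfun}.
Local Notation "U ^⊥" := (orthov b U) (at level 8, format "U ^⊥").
Implicit Types (U V P Q H L C : {vspace E}) (x y z : E).

Lemma orthovS U V : (U <= V)%VS -> (V^⊥ <= U^⊥)%VS.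
Proof.
move=> sUV; apply/subvP => x /mem_orthovP xV; apply/mem_orthovP => u Uu.
exact/xV/(subvP sUV).
Qed.

Lemma orthov_eq0r U x y : x \in U -> y \in U^⊥ -> b x y = 0.
Proof. by move=> Ux /mem_orthovP yU; apply/eqP; rewrite herm_eq0C yU. Qed.

Lemma orthov_eq0l U x y : x \in U -> y \in U^⊥ -> b y x = 0.
Proof. by move=> Ux /mem_orthovP; apply. Qed.

Definition pairing_row P x : 'rV[k]_(\dim P) := \row_(i < \dim P) b x (vbasis P)`_i.

Lemma pairing_row_is_linear P : linear (pairing_row P).
Proof. by move=> c x y; apply/rowP => i; rewrite !mxE linearPl. Qed.

HB.instance Definition _ P :=
  GRing.isLinear.Build k E _ _ (pairing_row P) (pairing_row_is_linear P).

Definition pairing P : 'Hom(E, 'rV[k]_(\dim P)) := linfun (pairing_row P).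

Lemma pairingE P x : pairing P x = pairing_row P x.
Proof. by rewrite lfunE. Qed.

Lemma lker_pairing P : lker (pairing P) = P^⊥.
Proof.
apply/vspaceP => x; rewrite memv_ker pairingE; apply/eqP/mem_orthovP => [x0 u Pu | xP].
  rewrite (coord_vbasis Pu) linear_sumr big1 // => i _.
  by have /rowP/(_ i) := x0; rewrite !mxE linearZr /= => ->; rewrite mulr0.
by apply/rowP => i; rewrite !mxE xP // vbasis_mem // mem_nth // size_tuple.
Qed.

Lemma dimv_pairing P Q : (Q :&: P^⊥ = 0)%VS -> \dim (pairing P @: Q) = \dim Q.
Proof. by rewrite -lker_pairing; apply: limg_dim_eq. Qed.

Lemma dimv_pairing_codom P : \dim {:'rV[k]_(\dim P)} = \dim P.
Proof. by rewrite dimvf /dim /= mul1n. Qed.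

Lemma dimv_leq_orthov P Q : (Q :&: P^⊥ = 0)%VS -> (\dim Q <= \dim P)%N.
Proof.
by move/dimv_pairing <-; rewrite -[leqRHS]dimv_pairing_codom dimvS ?subvf.
Qed.

Lemma limg_pairing P Q :
  (Q :&: P^⊥ = 0)%VS -> (\dim P <= \dim Q)%N -> (pairing P @: Q)%VS = fullv.
Proof.
by move=> QP0 lePQ; apply/eqP; rewrite eqEdim subvf dimv_pairing_codom dimv_pairing.
Qed.

Lemma orthov_complement P Q x :
  (Q :&: P^⊥ = 0)%VS -> (\dim P <= \dim Q)%N -> exists2 y, y \in Q & x - y \in P^⊥.
Proof.
move=> QP0 lePQ; have : pairing P x \in (pairing P @: Q)%VS.
  by rewrite limg_pairing ?memvf.
case/memv_imgP=> y Qy eq_xy; exists y => //.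
by rewrite -lker_pairing memv_ker linearB /= eq_xy subrr.
Qed.

Lemma addv_orthov H : (H :&: H^⊥ = 0)%VS -> (H + H^⊥)%VS = fullv.
Proof.
move=> HH0; apply/eqP; rewrite eqEsubv subvf; apply/subvP => x _.
have [h Hh xh] := orthov_complement x HH0 (leqnn _).
by rewrite -(subrK h x) addrC memv_add.
Qed.

Lemma addv_capv_orthov V H : (H :&: H^⊥ = 0)%VS -> (H <= V)%VS ->
  (H + V :&: H^⊥)%VS = V.
Proof.
move=> HH0 sHV; apply/eqP; rewrite eqEsubv subv_add sHV capvSl /=.
apply/subvP => x Vx; have : x \in (H + H^⊥)%VS by rewrite addv_orthov ?memvf.
case/memv_addP=> h Hh [p pH def_x]; rewrite def_x memv_add // memv_cap pH andbT.
by rewrite -[p](addKr h) -def_x memvD // memvN (subvP sHV).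
Qed.

Lemma nondeg_capv_orthov V H : (V :&: V^⊥ = 0)%VS -> (H :&: H^⊥ = 0)%VS ->
  (H <= V)%VS -> ((V :&: H^⊥) :&: (V :&: H^⊥)^⊥ = 0)%VS.
Proof.
move=> VV0 HH0 sHV; apply/eqP; rewrite -subv0 -VV0; apply/subvP => x.
rewrite !memv_cap => /andP[/andP[Vx xH] /mem_orthovP xW]; rewrite Vx /=.
apply/mem_orthovP => z; rewrite -(addv_capv_orthov HH0 sHV) => /memv_addP[h Hh [w Ww ->]].
by rewrite linearDr /= (orthov_eq0l Hh xH) xW // add0r.
Qed.

Lemma hyperbolic_nondeg L L' : (L <= L^⊥)%VS -> (L' <= L'^⊥)%VS ->
  (L :&: L'^⊥ = 0)%VS -> (L' :&: L^⊥ = 0)%VS -> ((L + L') :&: (L + L')^⊥ = 0)%VS.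
Proof.
move=> isoL isoL' LL'0 L'L0; apply/eqP; rewrite -subv0; apply/subvP => x.
rewrite memv_cap => /andP[/memv_addP[l Ll [l' L'l' ->]] xH].
have perpL' := subvP (orthovS (addvSr L L')) _ xH.
have perpL := subvP (orthovS (addvSl L L')) _ xH.
suff [-> ->] : l = 0 /\ l' = 0 by rewrite addr0 mem0v.
split; apply/eqP; rewrite -memv0; [rewrite -LL'0 | rewrite -L'L0]; rewrite memv_cap.
- rewrite Ll; apply/mem_orthovP => y L'y; have /mem_orthovP/(_ y L'y) := perpL'.
  by rewrite linearDl /= (orthov_eq0l L'y (subvP isoL' _ L'l')) addr0.
- rewrite L'l'; apply/mem_orthovP => y Ly; have /mem_orthovP/(_ y Ly) := perpL.
  by rewrite linearDl /= (orthov_eq0l Ly (subvP isoL _ Ll)) add0r.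
Qed.

Lemma form_coordl C x z : x \in C ->
  b x z = \sum_(i < \dim C) coord (vbasis C) i x * b (vbasis C)`_i z.
Proof.
move=> Cx; rewrite {1}(coord_vbasis Cx) linear_sumlz; apply: eq_bigr => i _.
by rewrite linearZl_LR.
Qed.

Lemma form_coordr C x z : x \in C ->
  b z x = \sum_(i < \dim C) coord (vbasis C) i x * b z (vbasis C)`_i.
Proof.
move=> Cx; rewrite {1}(coord_vbasis Cx) linear_sumr; apply: eq_bigr => i _.
by rewrite linearZ.
Qed.

Lemma isotropic_graph L C :
  (forall x, b x x = 0) \/ (2 != 0 :> k) ->
  (L <= L^⊥)%VS -> (L :&: C^⊥ = 0)%VS -> (\dim C <= \dim L)%N ->
  exists2 tau : 'End(E), forall x, tau x \in L &
    forall x y, x \in C -> y \in C -> b (x + tau x) (y + tau y) = 0.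
Proof.
move=> alt_or_2 isoL LC0 leCL; set e := vbasis C.
have [G splitG] : exists G : 'M[k]_(\dim C),
    forall i j : 'I_(\dim C), b e`_i e`_j = G i j + (-1) ^+ eps * G j i.
  pose M : 'M[k]_(\dim C) := \matrix_(i, j) b e`_i e`_j.
  have Msign i j : M j i = (-1) ^+ eps * M i j by rewrite !mxE hermC.
  have Mdiag : (forall i, M i i = 0) \/ (2 != 0 :> k).
    by case: alt_or_2 => [alt | ->]; [left => i; rewrite mxE alt | right].
  have [G MG] := split_sign_matrix Msign Mdiag.
  by exists G => i j; rewrite -MG mxE.
(* With b = gamma + eps gamma^T on C, choosing b (tau x) y = - gamma x y makes the
   cross terms of b (x + tau x) (y + tau y) cancel b x y. *)
pose gamma x y := \sum_i \sum_j coord e i x * coord e j y * G i j.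
have b_gamma x y : x \in C -> y \in C -> b x y = gamma x y + (-1) ^+ eps * gamma y x.
  move=> Cx Cy; rewrite (form_coordl _ Cx) [gamma y x]exchange_big mulr_sumr -big_split.
  apply: eq_bigr => i _; rewrite (form_coordr _ Cy) mulr_sumr mulr_sumr -big_split.
  by apply: eq_bigr => j _; rewrite splitG /=; ring.
have /fin_all_exists2[l Ll b_l] : forall j : 'I_(\dim C),
    exists2 y, y \in L & forall i : 'I_(\dim C), b y e`_i = - G j i.
  move=> j; have : - row j G \in (pairing C @: L)%VS by rewrite limg_pairing ?memvf.
  case/memv_imgP=> y Ly /rowP eq_y; exists y => // i.
  by have := eq_y i; rewrite pairingE !mxE.
have [tau tauE] : exists tau : 'End(E), tau =1 fun x => \sum_j coord e j x *: l j.
  apply: lfun_of_linear => c x y; rewrite scaler_sumr -big_split.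
  by apply: eq_bigr => j _; rewrite linearP scalerDl scalerA.
have tauL x : tau x \in L by rewrite tauE memv_suml // => j _; rewrite memvZ.
have b_tau z w : w \in C -> b (tau z) w = - gamma z w.
  move=> Cw; rewrite tauE linear_sumlz -sumrN; apply: eq_bigr => j _.
  rewrite linearZl_LR /= (form_coordr _ Cw) mulr_sumr -sumrN.
  by apply: eq_bigr => i _; rewrite b_l -/e; ring.
exists tau => // x y Cx Cy.
rewrite linearDl !linearDr /= (orthov_eq0r (tauL x) (subvP isoL _ (tauL y))).
rewrite b_gamma // [b x (tau y)]hermC /= !b_tau //; ring.
Qed.

Lemma isotropic_complement L E0 E1 :
  (forall x, b x x = 0) \/ (2 != 0 :> k) ->
  (L <= E0)%VS -> (E0 <= E1)%VS -> (E0 <= L^⊥)%VS ->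
  (E1 :&: L^⊥ = E0)%VS -> (L :&: E1^⊥ = 0)%VS ->
  exists L', [/\ (E0 + L' = E1)%VS, (L' :&: E0 = 0)%VS, (L' <= L'^⊥)%VS,
                 (L' :&: L^⊥ = 0)%VS & (L :&: L'^⊥ = 0)%VS].
Proof.
move=> alt_or_2 sLE0 sE01 sE0L E1L LE1.
have perp_span X : (E1 <= E0 + X)%VS -> (L :&: X^⊥ = 0)%VS.
  move=> sE1X; apply/eqP; rewrite -subv0 -LE1; apply/subvP => l.
  rewrite !memv_cap => /andP[Ll lX]; rewrite Ll; apply/mem_orthovP => y E1y.
  have /memv_addP[e E0e [z Xz ->]] := subvP sE1X _ E1y.
  by rewrite linearDr /= (orthov_eq0r Ll (subvP sE0L _ E0e)) (orthov_eq0l Xz lX) addr0.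
have perp_free X : (X <= E1)%VS -> (X :&: E0 = 0)%VS -> (X :&: L^⊥ = 0)%VS.
  move=> sXE1 XE0; apply/eqP; rewrite -subv0 -XE0 -E1L capvA subv_cap capvSr /=.
  by rewrite andbT subv_cap capvSl (subv_trans (capvSl _ _) sXE1).
set C := (E1 :\: E0)%VS.
have E1C : (E0 + C = E1)%VS.
  by rewrite addvC -{1}(addv_diff_cap E1 E0) (capv_idPr sE01).
have CE0 : (C :&: E0 = 0)%VS := capv_diff E1 E0.
have LC : (L :&: C^⊥ = 0)%VS by apply: perp_span; rewrite E1C.
have CL := perp_free C (diffvSl E1 E0) CE0.
have [tau tauL tau_iso] := isotropic_graph alt_or_2 (subv_trans sLE0 sE0L) LC (dimv_leq_orthov CL).
have [E1L' L'E0] := graph_complement E1C CE0 (fun x => subvP sLE0 _ (tauL x)).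
exists ((\1 + tau)%VF @: C)%VS; split => //.
- apply/subvP => _ /memv_imgP[c Cc ->]; apply/mem_orthovP => _ /memv_imgP[d Cd ->].
  by rewrite !add_lfunE !id_lfunE tau_iso.
- by apply: perp_free L'E0; rewrite -E1L' addvSr.
by apply: perp_span; rewrite E1L'.
Qed.

Section Filtrations.
Variables (A : algType k) (star : A -> A).
Variables (F : vectType k) (actF : A -> 'End(F)) (r : nat).
Variables (Fs : nat -> {vspace F}) (phi : nat -> 'Hom(E, F)).
Hypothesis Fs_stable : forall i, (i < r)%N -> submodule actF (Fs i).
Implicit Types (act : A -> 'End(E)) (Es : nat -> {vspace E}) (g h : nat -> 'Hom(F, E)).

Definition compatible_on act V :=
  forall a x y, x \in V -> y \in V -> b (act a x) y = b x (act (star a) y).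

Definition factor_datum act Es i :=
  [/\ simple_factor act (Es i) (Es i.+1), (phi i @: Es i.+1)%VS = Fs i,
      forall x, x \in Es i.+1 -> (phi i x = 0 <-> x \in Es i) &
      forall a x, x \in Es i.+1 -> phi i (act a x) = actF a (phi i x)].

(* Trivial steps Es i = Es i.+1 record the factors already split off by the induction. *)
Definition filtration_datum V act Es :=
  [/\ (V :&: V^⊥ = 0)%VS, compatible_on act V,
      [/\ Es 0 = 0%VS, Es r = V & forall i, (i <= r)%N -> submodule act (Es i)] &
      forall i, (i < r)%N -> Es i = Es i.+1 \/ factor_datum act Es i].

Definition compatible_maps (f f' : 'Hom(F, E)) (U U' : {vspace F}) :=
  forall a u v, u \in U -> v \in U' ->
    b (f (actF a u)) (f' v) = b (f u) (f' (actF (star a) v)).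

Definition compatible_lift V Es g :=
  [/\ forall i, (i < r)%N -> (g i @: Fs i <= V)%VS,
      (V <= \sum_(i < r | Es i != Es i.+1) g i @: Fs i)%VS &
      forall i j, (i < r)%N -> (j < r)%N -> compatible_maps (g i) (g j) (Fs i) (Fs j)].

Lemma orthov_submodule act V U U' : compatible_on act V ->
  submodule act U -> submodule act U' -> (U <= V)%VS -> (U' <= V)%VS ->
  submodule act (U :&: U'^⊥)%VS.
Proof.
move=> compat stU stU' sUV sU'V a x; rewrite !memv_cap => /andP[Ux /mem_orthovP xU'].
rewrite stU //=; apply/mem_orthovP => u U'u.
by rewrite compat ?(subvP sUV _ Ux) ?(subvP sU'V _ U'u) //; apply: xU'; apply: stU'.
Qed.

Section Datum.
Variables (V : {vspace E}) (act : A -> 'End(E)) (Es : nat -> {vspace E}).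
Hypothesis datum : filtration_datum V act Es.

Lemma datum_step i : (i < r)%N -> (Es i <= Es i.+1)%VS.
Proof. by case: (datum) => _ _ _ step /step[-> | [[]]]. Qed.

Lemma datum_mono i j : (i <= j)%N -> (j <= r)%N -> (Es i <= Es j)%VS.
Proof.
elim: j => [|j IHj]; first by rewrite leqn0 => /eqP ->.
rewrite leq_eqVlt => /orP[/eqP -> // | lt_ij] ltjr.
exact: subv_trans (IHj lt_ij (ltnW ltjr)) (datum_step ltjr).
Qed.

Lemma datum_sub i : (i <= r)%N -> (Es i <= V)%VS.
Proof. by move=> le_ir; case: (datum) => _ _ [_ <- _] _; apply: datum_mono. Qed.

Lemma datum_stable i : (i <= r)%N -> submodule act (Es i).
Proof. by case: (datum) => _ _ [_ _ stable] _; apply: stable. Qed.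

Lemma datum_stableV : submodule act V.
Proof. by case: (datum) => _ _ [_ <- _] _; apply: datum_stable. Qed.

Lemma datum_trivial_prefix n : (n <= r)%N ->
  (forall i, (i < n)%N -> Es i = Es i.+1) -> Es n = 0%VS.
Proof.
case: (datum) => _ _ [E0 _ _] _; elim: n => // n IHn ltnr triv.
by rewrite -triv // IHn ?(ltnW ltnr) // => i lt_in; apply/triv/ltnW.
Qed.

Lemma datum_factor i : (i < r)%N -> Es i != Es i.+1 -> factor_datum act Es i.
Proof. by case: (datum) => _ _ _ step /step[-> /eqP | ]. Qed.

End Datum.

Lemma factor_lift act Es i U : factor_datum act Es i -> submodule act (Es i.+1) ->
  (Es i + U = Es i.+1)%VS -> (U :&: Es i = 0)%VS ->
  exists2 h : 'Hom(F, E), (h @: Fs i)%VS = U &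
    forall a u, u \in Fs i -> h (actF a u) - act a (h u) \in Es i.
Proof.
move=> [_ img_phi ker_phi phiA] stable sumU capU.
have sUE : (U <= Es i.+1)%VS by rewrite -sumU addvSr.
have phi0 x : x \in Es i -> phi i x = 0.
  by move=> Ex; apply/ker_phi => //; rewrite -sumU (subvP (addvSl _ _)).
have [h hK] : exists h : 'Hom(F, E), {in U, cancel (phi i) h}.
  apply: lfun_inv_on; apply/eqP; rewrite -subv0 -capU; apply/subvP => x.
  rewrite !memv_cap memv_ker => /andP[Ux /eqP phix0]; rewrite Ux.
  by apply/ker_phi => //; apply: subvP sUE _ Ux.
have phiU : (phi i @: U)%VS = Fs i.
  rewrite -img_phi -sumU limgD; suff -> : (phi i @: Es i = 0)%VS by rewrite add0v.
  by apply/eqP; rewrite -lkerE; apply/subvP => x Ex; rewrite memv_ker phi0.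
exists h.
  rewrite -phiU -limg_comp -{2}[U]lim1g; apply: eq_in_limg => x Ux.
  by rewrite comp_lfunE id_lfunE hK.
move=> a u; rewrite -phiU => /memv_imgP[x Ux ->].
have : act a x \in (Es i + U)%VS by rewrite sumU stable ?(subvP sUE).
case/memv_addP=> e Ee [y Uy def_ax].
rewrite -phiA ?(subvP sUE) // def_ax linearD /= phi0 // add0r !hK // def_ax.
by rewrite opprD addrCA subrr addr0 memvN.
Qed.

Lemma compatible_maps_orthogonal (f f' : 'Hom(F, E)) (U U' : {vspace F}) X X' :
  submodule actF U -> submodule actF U' ->
  (f @: U <= X)%VS -> (f' @: U' <= X')%VS -> (X' <= X^⊥)%VS ->
  compatible_maps f f' U U'.
Proof.
move=> stU stU' sfX sfX' sXX' a u v Uu U'v.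
have perp w w' : w \in U -> w' \in U' -> b (f w) (f' w') = 0.
  move=> Uw U'w'; apply: orthov_eq0r (subvP sfX _ (memv_img f Uw)) _.
  exact: subvP sXX' _ (subvP sfX' _ (memv_img f' U'w')).
by rewrite !perp ?stU ?stU'.
Qed.

Lemma compatible_maps_defect act V (f f' : 'Hom(F, E)) (U U' : {vspace F}) :
  compatible_on act V -> (f @: U <= V)%VS -> (f' @: U' <= V)%VS ->
  (forall a u v, u \in U -> v \in U' -> b (f (actF a u) - act a (f u)) (f' v) = 0) ->
  (forall a u v, u \in U -> v \in U' -> b (f u) (f' (actF a v) - act a (f' v)) = 0) ->
  compatible_maps f f' U U'.
Proof.
move=> compat sfV sf'V defect defect' a u v Uu U'v.
have Vfu := subvP sfV _ (memv_img f Uu); have Vf'v := subvP sf'V _ (memv_img f' U'v).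
move: (defect a u v Uu U'v) (defect' (star a) u v Uu U'v).
rewrite linearBl linearBr /= compat // => /eqP; rewrite subr_eq0 => /eqP ->.
by move/eqP; rewrite subr_eq0 => /eqP ->.
Qed.

Lemma compatible_lift_glue V W Es Es' H (D : pred nat) g h :
  (H <= V)%VS -> (W <= V)%VS -> (V <= H + W)%VS -> (H <= W^⊥)%VS ->
  (forall i, (i < r)%N -> D i -> Es i != Es i.+1) ->
  (forall i, (i < r)%N -> Es' i != Es' i.+1 -> ~~ D i && (Es i != Es i.+1)) ->
  compatible_lift W Es' g ->
  (forall i, (i < r)%N -> D i -> (h i @: Fs i <= H)%VS) ->
  (H <= \sum_(i < r | D i) h i @: Fs i)%VS ->
  (forall i j, (i < r)%N -> (j < r)%N -> D i -> D j ->
     compatible_maps (h i) (h j) (Fs i) (Fs j)) ->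
  compatible_lift V Es (fun i => if D i then h i else g i).
Proof.
move=> sHV sWV sVHW sHW D_active W_active [gW Wg g_compat] hH Hh h_compat.
have sWH : (W <= H^⊥)%VS by rewrite -orthov_sym.
split=> [i ir | | i j ir jr].
- by case: ifP => Di; [apply: subv_trans sHV; apply: hH | apply: subv_trans sWV; apply: gW].
- apply: subv_trans sVHW _; rewrite subv_add; apply/andP; split.
    apply: subv_trans Hh _; apply/subv_sumP => i Di; apply: (sumv_sup i).
      exact: D_active.
    by rewrite Di.
  apply: subv_trans Wg _; apply/subv_sumP => i /(W_active i (ltn_ord i))/andP[nDi act_i].
  by apply: (sumv_sup i) => //; rewrite (negPf nDi).
case: ifP => Di; case: ifP => Dj; first exact: h_compat.
- exact: compatible_maps_orthogonal (Fs_stable ir) (Fs_stable jr) (hH i ir Di) (gW j jr) sWH.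
- exact: compatible_maps_orthogonal (Fs_stable ir) (Fs_stable jr) (gW i ir) (hH j jr Dj) sHW.
exact: g_compat.
Qed.

Section Reduction.
Variables (V : {vspace E}) (act : A -> 'End(E)) (Es : nat -> {vspace E}).
Variables (i0 : nat) (H : {vspace E}) (D : pred nat) (h : nat -> 'Hom(F, E)).
Hypotheses (datum : filtration_datum V act Es) (i0r : (i0 < r)%N) (Es_i0 : Es i0 = 0%VS).
Hypothesis i0_first : forall i, (i < r)%N -> Es i != Es i.+1 -> (i0 <= i)%N.
Hypothesis i0_active : Es i0 != Es i0.+1.
Hypothesis IH : forall W act' Es', (\dim W < \dim V)%N -> filtration_datum W act' Es' ->
  exists g, compatible_lift W Es' g.
Let L := Es i0.+1.
Let W := (V :&: H^⊥)%VS.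
Hypotheses (sHV : (H <= V)%VS) (nondegH : (H :&: H^⊥ = 0)%VS) (sLH : (L <= H)%VS).
Hypotheses (D_i0 : D i0) (perpL_sub : (V :&: L^⊥ <= L + W)%VS).
Hypothesis D_trivial : forall i, (i < r)%N -> D i -> (Es i.+1 :&: W <= Es i)%VS.
Hypothesis split_active : forall i, (i < r)%N -> Es i != Es i.+1 -> ~~ D i ->
  (Es i.+1 <= Es i + Es i.+1 :&: W)%VS.

Let sWV : (W <= V)%VS := capvSl V H^⊥.
Let sWL : (W <= L^⊥)%VS := subv_trans (capvSr V H^⊥) (orthovS sLH).

Let WL0 : (W :&: L = 0)%VS.
Proof. by apply/eqP; rewrite -subv0 -nondegH capvC capvS // capvSr. Qed.

Let sLV : (L <= V)%VS := subv_trans sLH sHV.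

(* W is a complement of L in V :&: L^⊥, hence a model of L^⊥/L, on which A acts
   through the projection along L. *)
Let ract a := (daddv_pi W L \o act a)%VF.

Let stable_perpL : submodule act (V :&: L^⊥)%VS.
Proof.
case: (datum) => _ compat _ _.
exact: orthov_submodule compat (datum_stableV datum) (datum_stable datum i0r) _ sLV.
Qed.

Let ract_defect a x : x \in W -> act a x - ract a x \in L.
Proof.
move=> Wx; have LWact : act a x \in (W + L)%VS.
  by rewrite addvC (subvP perpL_sub) // stable_perpL // memv_cap (subvP sWV) ?(subvP sWL).
by rewrite comp_lfunE -{1}(daddv_pi_add WL0 LWact) addrC addKr memv_pi.
Qed.

Let ract_W a x : ract a x \in W.
Proof. by rewrite comp_lfunE memv_pi. Qed.

Let L_sub_active i : (i < r)%N -> Es i != Es i.+1 -> ~~ D i -> (L <= Es i)%VS.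
Proof.
move=> ir act_i nDi; apply: (datum_mono datum _ (ltnW ir)).
by rewrite ltn_neqAle i0_first // andbT; apply: contraNneq nDi => <-.
Qed.

Let ract_stable i : (i <= r)%N -> submodule ract (Es i :&: W)%VS.
Proof.
move=> ir a x; rewrite memv_cap => /andP[Ex Wx]; rewrite memv_cap ract_W andbT.
have [le_i_i0 | lt_i0_i] := leqP i i0.
  have : x \in 0%VS by rewrite -Es_i0 (subvP (datum_mono datum le_i_i0 (ltnW i0r))).
  by rewrite memv0 => /eqP ->; rewrite linear0 mem0v.
rewrite -[ract a x](subKr (act a x)) memvB ?(datum_stable datum ir) //.
exact: subvP (datum_mono datum lt_i0_i ir) _ (ract_defect a Wx).
Qed.

Let ract_compat : compatible_on ract W.
Proof.
move=> a x y Wx Wy; case: (datum) => _ compat _ _.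
rewrite -[ract a x](subKr (act a x)) -[ract _ y](subKr (act (star a) y)).
rewrite linearBl linearBr /= compat ?(subvP sWV) //.
rewrite (orthov_eq0r (ract_defect a Wx) (subvP sWL _ Wy)).
by rewrite (orthov_eq0l (ract_defect (star a) Wy) (subvP sWL _ Wx)) !subr0.
Qed.

Let restricted_simple i : (i < r)%N -> Es i != Es i.+1 -> ~~ D i ->
  simple_factor ract (Es i :&: W)%VS (Es i.+1 :&: W)%VS.
Proof.
move=> ir act_i nDi; have [[sEE _ simple] _ _ _] := datum_factor datum ir act_i.
have LEi := L_sub_active ir act_i nDi; have spl := split_active ir act_i nDi.
split; first exact: capvS.
  apply: contraNneq act_i => eqEW; rewrite eqEsubv sEE /=.
  by apply: subv_trans spl _; rewrite -eqEW subv_add subvv capvSl.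
move=> M stM sEM sME; have sMW : (M <= W)%VS := subv_trans sME (capvSr _ _).
have stME : submodule act (M + Es i)%VS.
  move=> a x /memv_addP[m Mm [e Ee ->]]; rewrite linearD /=.
  have -> : act a m + act a e = ract a m + ((act a m - ract a m) + act a e).
    by rewrite addrA subrKC.
  rewrite memv_add ?stM // memvD ?(datum_stable datum (ltnW ir)) //.
  exact: subvP LEi _ (ract_defect a (subvP sMW _ Mm)).
have sEME : (M + Es i <= Es i.+1)%VS by rewrite subv_add sEE (subv_trans sME) ?capvSl.
have [eqE | eqE1] := simple _ stME (addvSr _ _) sEME; [left | right].
  by apply/eqP; rewrite eqEsubv sEM subv_cap sMW -eqE addvSl.
apply/eqP; rewrite eqEsubv sME /=; apply/subvP => x; rewrite memv_cap -eqE1.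
case/andP=> /memv_addP[m Mm [e Ee ->]] Wme; rewrite memvD //.
have We : e \in W by rewrite -(addKr m e) memvD // memvN (subvP sMW).
by apply: (subvP sEM); rewrite memv_cap Ee.
Qed.

Let restricted_factor i : (i < r)%N -> Es i != Es i.+1 -> ~~ D i ->
  factor_datum ract (fun i => Es i :&: W)%VS i.
Proof.
move=> ir act_i nDi; have [[sEE _ _] img_phi ker_phi phiA] := datum_factor datum ir act_i.
have phiE x : x \in Es i -> phi i x = 0 by move=> Ex; apply/ker_phi; rewrite ?(subvP sEE).
split; first exact: restricted_simple.
- apply/eqP; rewrite eqEsubv -{1}img_phi limgS ?capvSl //= -{1}img_phi.
  apply/subvP => y /memv_imgP[x Ex ->].
  have /memv_addP[e Ee [w EWw ->]] := subvP (split_active ir act_i nDi) _ Ex.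
  by rewrite linearD /= phiE // add0r memv_img.
- move=> x; rewrite !memv_cap => /andP[Ex Wx]; rewrite Wx andbT; exact: ker_phi.
move=> a x; rewrite memv_cap => /andP[Ex Wx].
have dE : act a x - ract a x \in Es i.
  exact: subvP (L_sub_active ir act_i nDi) _ (ract_defect a Wx).
by rewrite -phiA // -[act a x](subrK (ract a x)) linearD /= (phiE _ dE) add0r.
Qed.

Let restricted_trivial i : (i < r)%N -> D i -> (Es i :&: W = Es i.+1 :&: W)%VS.
Proof.
move=> ir Di; apply/eqP; rewrite eqEsubv capvS ?(datum_step datum ir) //=.
by rewrite subv_cap capvSr D_trivial.
Qed.

Let restricted_datum : filtration_datum W ract (fun i => Es i :&: W)%VS.
Proof.
case: (datum) => nondegV _ [E0 Er _] _; split.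
- exact: nondeg_capv_orthov nondegV nondegH sHV.
- exact: ract_compat.
- by split=> [| |]; [rewrite E0 cap0v | rewrite Er; apply/capv_idPr | apply: ract_stable].
move=> i ir; have [-> | act_i] := eqVneq (Es i) (Es i.+1); first by left.
by case Di: (D i); [left; apply: restricted_trivial | right; apply: restricted_factor; rewrite ?Di].
Qed.

Let restricted_active i : (i < r)%N -> (Es i :&: W != Es i.+1 :&: W)%VS ->
  ~~ D i && (Es i != Es i.+1).
Proof.
move=> ir; case Di: (D i) => /=; first by rewrite restricted_trivial ?eqxx.
by apply: contraNneq => ->.
Qed.

Let dim_restricted : (\dim W < \dim V)%N.
Proof.
have : (\dim (W + L) <= \dim V)%N by rewrite dimvS // subv_add sWV sLV.
rewrite dimv_disjoint_sum // ; apply: leq_trans.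
by rewrite -addn1 leq_add2l lt0n dimv_eq0 /L -Es_i0 eq_sym.
Qed.

Lemma lift_by_reduction :
  (forall i, (i < r)%N -> D i -> Es i != Es i.+1) ->
  (forall i, (i < r)%N -> D i -> (h i @: Fs i <= H)%VS) ->
  (H <= \sum_(i < r | D i) h i @: Fs i)%VS ->
  (forall i j, (i < r)%N -> (j < r)%N -> D i -> D j ->
     compatible_maps (h i) (h j) (Fs i) (Fs j)) ->
  exists g, compatible_lift V Es g.
Proof.
move=> D_active hH Hh h_compat.
have [g liftW] := IH dim_restricted restricted_datum.
exists (fun i => if D i then h i else g i).
apply: compatible_lift_glue sHV sWV _ _ D_active restricted_active liftW hH Hh h_compat.
  by rewrite addv_capv_orthov.
by rewrite orthov_sym capvSr.
Qed.

End Reduction.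

Section FirstFactor.
Variables (V : {vspace E}) (act : A -> 'End(E)) (Es : nat -> {vspace E}) (i0 : nat).
Hypotheses (datum : filtration_datum V act Es) (i0r : (i0 < r)%N) (Es_i0 : Es i0 = 0%VS).
Hypothesis i0_first : forall i, (i < r)%N -> Es i != Es i.+1 -> (i0 <= i)%N.
Hypothesis i0_active : Es i0 != Es i0.+1.
Hypothesis IH : forall W act' Es', (\dim W < \dim V)%N -> filtration_datum W act' Es' ->
  exists g, compatible_lift W Es' g.
Let L := Es i0.+1.

Let sLV : (L <= V)%VS := datum_sub datum i0r.
Let stL : submodule act L := datum_stable datum i0r.
Let compatV : compatible_on act V. Proof. by case: datum. Qed.

Let L_simple M : submodule act M -> (M <= L)%VS -> M = 0%VS \/ M = L.
Proof.
have [[_ _ simple] _ _ _] := datum_factor datum i0r i0_active.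
by move=> stM sML; rewrite -Es_i0; apply: simple; rewrite ?Es_i0 ?sub0v.
Qed.

Let L_lift : exists2 h0 : 'Hom(F, E), (h0 @: Fs i0)%VS = L &
  forall a u, u \in Fs i0 -> h0 (actF a u) = act a (h0 u).
Proof.
have [h0 imh0 defect] := factor_lift (datum_factor datum i0r i0_active) stL
  (etrans (congr1 (addv^~ L) Es_i0) (add0v L)) (etrans (congr1 (capv L) Es_i0) (capv0 L)).
exists h0 => // a u Fu; apply/eqP; rewrite -subr_eq0 -memv0 -Es_i0; exact: defect.
Qed.

Let L_compat (h0 : 'Hom(F, E)) : (h0 @: Fs i0)%VS = L ->
  (forall a u, u \in Fs i0 -> h0 (actF a u) = act a (h0 u)) ->
  compatible_maps h0 h0 (Fs i0) (Fs i0).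
Proof.
move=> imh0 h0A; apply: compatible_maps_defect compatV _ _ _ _; rewrite ?imh0 //.
  by move=> a u v Fu _; rewrite h0A // subrr linear0l.
by move=> a u v _ Fv; rewrite h0A // subrr linear0r.
Qed.

Lemma lift_nonisotropic : ~~ (L <= L^⊥)%VS -> exists g, compatible_lift V Es g.
Proof.
move=> nisoL.
have LL0 : (L :&: L^⊥ = 0)%VS.
  have stLL : submodule act (L :&: L^⊥)%VS.
    exact: orthov_submodule compatV stL stL sLV sLV.
  have [// | eqL] := L_simple stLL (capvSl _ _).
  by case/negP: nisoL; rewrite -{1}eqL capvSr.
have [h0 imh0 h0A] := L_lift.
have perpL_sub : (V :&: L^⊥ <= L + V :&: L^⊥)%VS by apply: addvSr.
apply: (lift_by_reduction (D := pred1 i0) (h := fun=> h0) datum i0r Es_i0 i0_first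
          i0_active IH sLV LL0 (subvv L) _ perpL_sub) => //=.
- by move=> i ir /eqP ->; rewrite Es_i0 -LL0 capvS ?capvSr.
- move=> i ir act_i ni0; apply/subvP => x Ex.
  have : x \in (L + V :&: L^⊥)%VS by rewrite addv_capv_orthov // (subvP (datum_sub datum ir)).
  case/memv_addP=> l Ll [w Ww def_x]; rewrite def_x in Ex *.
  have i0i : (i0 < i)%N by rewrite ltn_neqAle eq_sym ni0 i0_first.
  exact: memv_add_cap (datum_step datum ir) (subvP (datum_mono datum i0i (ltnW ir)) _ Ll) Ww Ex.
- by move=> i ir /eqP ->.
- by move=> i ir /eqP ->; rewrite imh0.
- by apply: (sumv_sup (Ordinal i0r)) => //=; rewrite imh0.
by move=> i j ir jr /eqP -> /eqP ->; apply: L_compat.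
Qed.

Section IsotropicCase.
Hypothesis isoL : (L <= L^⊥)%VS.
Variables (j : nat) (L' : {vspace E}).
Hypotheses (i0j : (i0 < j)%N) (jr : (j < r)%N) (j_active : Es j != Es j.+1).
Hypotheses (Ej_perp : (Es j <= L^⊥)%VS) (Ej1_perp : (Es j.+1 :&: L^⊥ = Es j)%VS).
Hypotheses (sumL' : (Es j + L' = Es j.+1)%VS) (L'Ej : (L' :&: Es j = 0)%VS).
Hypotheses (isoL' : (L' <= L'^⊥)%VS) (L'L : (L' :&: L^⊥ = 0)%VS) (LL' : (L :&: L'^⊥ = 0)%VS).
Let H := (L + L')%VS.
Let W := (V :&: H^⊥)%VS.

Let nondegH : (H :&: H^⊥ = 0)%VS := hyperbolic_nondeg isoL isoL' LL' L'L.
Let sL'Ej1 : (L' <= Es j.+1)%VS. Proof. by rewrite -sumL' addvSr. Qed.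
Let sHV : (H <= V)%VS.
Proof. by rewrite subv_add sLV (subv_trans sL'Ej1) ?(datum_sub datum jr). Qed.
Let sWL : (W <= L^⊥)%VS := subv_trans (capvSr _ _) (orthovS (addvSl L L')).

Let decompose x : x \in V -> exists l l' w, [/\ l \in L, l' \in L', w \in W & x = l + l' + w].
Proof.
rewrite -{1}(addv_capv_orthov nondegH sHV) => /memv_addP[_ /memv_addP[l Ll [l' L'l' ->]]].
by case=> w Ww ->; exists l, l', w.
Qed.

Let decompose_perp x : x \in V -> x \in L^⊥ -> exists l w, [/\ l \in L, w \in W & x = l + w].
Proof.
move=> /decompose[l [l' [w [Ll L'l' Ww ->]]]].
rewrite (rpredDr _ (subvP sWL _ Ww)) (rpredDl _ (subvP isoL _ Ll)) => l'L.
have l'0 : l' = 0 by apply/eqP; rewrite -memv0 -L'L memv_cap L'l'.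
by exists l, w; rewrite l'0 addr0.
Qed.

Let perpL_sub : (V :&: L^⊥ <= L + W)%VS.
Proof.
apply/subvP => x; rewrite memv_cap => /andP[Vx /(decompose_perp Vx)[l [w [Ll Ww ->]]]].
exact: memv_add.
Qed.

Let D := [pred i | (i == i0) || (i == j)].

Let D_trivial i : (i < r)%N -> D i -> (Es i.+1 :&: W <= Es i)%VS.
Proof.
move=> ir /orP[/eqP -> | /eqP ->]; first by rewrite Es_i0 -nondegH capvS ?addvSl ?capvSr.
by rewrite -Ej1_perp capvS // subv_trans (capvSr _ _) (orthovS (addvSl L L')).
Qed.

Let split_active i : (i < r)%N -> Es i != Es i.+1 -> ~~ D i ->
  (Es i.+1 <= Es i + Es i.+1 :&: W)%VS.
Proof.
rewrite negb_or => ir act_i /andP[ni0 nj]; apply/subvP => x Ex.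
have Vx := subvP (datum_sub datum ir) _ Ex; have sEi1 := datum_step datum ir.
have i0i : (i0 < i)%N by rewrite ltn_neqAle eq_sym ni0 i0_first.
have sLEi : (L <= Es i)%VS := datum_mono datum i0i (ltnW ir).
have [lt_ij | lt_ji] := ltnP i j.
  have xL := subvP (subv_trans (datum_mono datum lt_ij (ltnW jr)) Ej_perp) _ Ex.
  have [l [w [Ll Ww def_x]]] := decompose_perp Vx xL; rewrite def_x in Ex *.
  exact: memv_add_cap sEi1 (subvP sLEi _ Ll) Ww Ex.
have {nj}lt_ji : (j < i)%N by rewrite ltn_neqAle eq_sym nj lt_ji.
have sL'Ei : (L' <= Es i)%VS := subv_trans sL'Ej1 (datum_mono datum lt_ji (ltnW ir)).
have [l [l' [w [Ll L'l' Ww def_x]]]] := decompose Vx; rewrite def_x in Ex *.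
exact: memv_add_cap sEi1 (memvD (subvP sLEi _ Ll) (subvP sL'Ei _ L'l')) Ww Ex.
Qed.

Lemma lift_hyperbolic : exists g, compatible_lift V Es g.
Proof.
have [h0 imh0 h0A] := L_lift.
have [hj imhj hjA] := factor_lift (datum_factor datum jr j_active) (datum_stable datum jr)
  sumL' L'Ej.
have ji0 : (j == i0) = false := gtn_eqF i0j.
have sL'V : (L' <= V)%VS := subv_trans sL'Ej1 (datum_sub datum jr).
apply: (lift_by_reduction (D := D) (h := fun i => if i == i0 then h0 else hj) datum i0r Es_i0
  i0_first i0_active IH sHV nondegH (addvSl L L') _ perpL_sub D_trivial split_active).
- by rewrite /D /= eqxx.
- by move=> i ir /orP[/eqP -> | /eqP ->].
- by move=> i ir /orP[/eqP -> | /eqP ->]; rewrite ?eqxx ?ji0 ?imh0 ?imhj ?addvSl ?addvSr.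
- rewrite subv_add; apply/andP; split.
    by apply: (sumv_sup (Ordinal i0r)); rewrite /D /= ?eqxx ?imh0.
  by apply: (sumv_sup (Ordinal jr)); rewrite /D /= ?eqxx ?orbT ?ji0 ?imhj.
have hj_defect a u : u \in Fs j -> hj (actF a u) - act a (hj u) \in L^⊥.
  by move=> Fu; apply: (subvP Ej_perp); apply: hjA.
have h0L u : u \in Fs i0 -> h0 u \in L by move=> Fu; rewrite -imh0 memv_img.
move=> i m ir mr /orP[/eqP -> | /eqP ->] /orP[/eqP -> | /eqP ->]; rewrite ?eqxx ?ji0.
- exact: L_compat.
- apply: compatible_maps_defect compatV _ _ _ _; rewrite ?imh0 ?imhj //.
    by move=> a u v Fu _; rewrite h0A // subrr linear0l.
  by move=> a u v Fu Fv; apply: orthov_eq0r (h0L u Fu) (hj_defect a v Fv).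
- apply: compatible_maps_defect compatV _ _ _ _; rewrite ?imh0 ?imhj //.
    by move=> a u v Fu Fv; apply: orthov_eq0l (h0L v Fv) (hj_defect a u Fu).
  by move=> a u v _ Fv; rewrite h0A // subrr linear0r.
by apply: compatible_maps_orthogonal (Fs_stable jr) (Fs_stable jr) _ _ isoL'; rewrite imhj.
Qed.

End IsotropicCase.

Lemma lift_isotropic : (forall x, b x x = 0) \/ (2 != 0 :> k) ->
  (L <= L^⊥)%VS -> exists g, compatible_lift V Es g.
Proof.
move=> alt_or_2 isoL; case: (datum) => nondegV _ [E0 Er _] _.
have stV := datum_stableV datum.
have : exists j, (j < r)%N && ~~ (Es j.+1 <= L^⊥)%VS.
  exists r.-1; rewrite prednK ?(leq_ltn_trans (leq0n i0) i0r) // leqnn Er /=.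
  apply: contraNN i0_active => sVL; rewrite Es_i0 eq_sym -subv0 -nondegV subv_cap sLV.
  by rewrite orthov_sym.
(* The first step not orthogonal to L: its factor pairs perfectly with L. *)
case/ex_minnP=> j /andP[jr nEj] j_min.
have Ej_perp : (Es j <= L^⊥)%VS.
  case: j jr nEj j_min => [|j] jr nEj j_min; first by rewrite E0 sub0v.
  by apply: contraTT (ltnSn j) => nE; rewrite -leqNgt j_min // (ltnW jr).
have i0j : (i0 < j)%N.
  rewrite ltnNge; apply: contra nEj => le_j_i0; apply: subv_trans isoL.
  by apply: (datum_mono datum _ i0r); rewrite ltnS.
have j_active : Es j != Es j.+1 by apply: contraNneq nEj => <-.
have [[sEj _ simple_j] _ _ _] := datum_factor datum jr j_active.
have Ej1_perp : (Es j.+1 :&: L^⊥ = Es j)%VS.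
  have st := orthov_submodule compatV (datum_stable datum jr) stL (datum_sub datum jr) sLV.
  have sEjM : (Es j <= Es j.+1 :&: L^⊥)%VS by rewrite subv_cap sEj Ej_perp.
  have [// | eqE] := simple_j _ st sEjM (capvSl _ _).
  by case/negP: nEj; rewrite -{1}eqE capvSr.
have LEj1 : (L :&: (Es j.+1)^⊥ = 0)%VS.
  have st := orthov_submodule compatV stL (datum_stable datum jr) sLV (datum_sub datum jr).
  have [// | eqL] := L_simple st (capvSl _ _).
  by case/negP: nEj; rewrite -orthov_sym -{1}eqL capvSr.
have sLEj := datum_mono datum i0j (ltnW jr).
have [L' [sumL' L'Ej isoL' L'L LL']] :=
  isotropic_complement alt_or_2 sLEj sEj Ej_perp Ej1_perp LEj1.
exact: (lift_hyperbolic isoL i0j jr j_active Ej_perp Ej1_perp sumL' L'Ej isoL' L'L LL').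
Qed.

End FirstFactor.

Lemma filtration_lift V act Es : (forall x, b x x = 0) \/ (2 != 0 :> k) ->
  filtration_datum V act Es -> exists g, compatible_lift V Es g.
Proof.
move=> alt_or_2; have [n] := ubnP (\dim V); elim: n => // n IHn in V act Es *.
rewrite ltnS => leVn datum.
case: (boolP [exists i : 'I_r, Es i != Es i.+1]) => [/existsP[i act_i] | /existsPn triv].
  have : exists i, (i < r)%N && (Es i != Es i.+1) by exists i; rewrite ltn_ord act_i.
  case/ex_minnP=> i0 /andP[i0r i0_active] i0_min.
  have i0_first j : (j < r)%N -> Es j != Es j.+1 -> (i0 <= j)%N.
    by move=> jr act_j; apply: i0_min; rewrite jr.
  have Es_i0 : Es i0 = 0%VS.
    apply: (datum_trivial_prefix datum (ltnW i0r)) => j lt_j_i0; apply/eqP.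
    have jr := ltn_trans lt_j_i0 i0r.
    by apply: contraTT lt_j_i0 => act_j; rewrite -leqNgt i0_first.
  have IH W act' Es' : (\dim W < \dim V)%N -> filtration_datum W act' Es' ->
      exists g, compatible_lift W Es' g.
    by move=> ltWV; apply: IHn; apply: leq_trans ltWV leVn.
  have [isoL | nisoL] := boolP (Es i0.+1 <= (Es i0.+1)^⊥)%VS.
    exact: lift_isotropic datum i0r Es_i0 i0_first i0_active IH alt_or_2 isoL.
  exact: lift_nonisotropic datum i0r Es_i0 i0_first i0_active IH nisoL.
have V0 : V = 0%VS.
  case: (datum) => _ _ [_ <- _] _; apply: (datum_trivial_prefix datum (leqnn r)) => i ir.
  by apply/eqP; have := triv (Ordinal ir); rewrite negbK.
exists (fun=> 0%VF); split=> [i _ | | i j _ _ a u v _ _].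
- by rewrite lim0g sub0v.
- by rewrite V0 sub0v.
by rewrite !zero_lfunE.
Qed.

End Filtrations.
End HermitianForm.

Section DirectSumLift.
Variables (k : fieldType) (E : vectType k) (eps : bool) (b : {hermitian E for eps & idfun}).
Variables (A : algType k) (star : A -> A) (F : vectType k) (actF : A -> 'End(F)).
Variables (r : nat) (Fs : nat -> {vspace F}) (g : nat -> 'Hom(F, E)).
Hypothesis Fs_stable : forall i, (i < r)%N -> submodule actF (Fs i).
Hypotheses (sumF : (\sum_(i < r) Fs i)%VS = fullv) (dirF : directv (\sum_(i < r) Fs i)).
Hypothesis g_full : (fullv <= \sum_(i < r) g i @: Fs i)%VS.
Hypothesis g_compat : forall i j, (i < r)%N -> (j < r)%N ->
  compatible_maps b star actF (g i) (g j) (Fs i) (Fs j).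

Let pi := sumv_pi_for (esym sumF).
Let G : 'Hom(F, E) := (\sum_(i < r) (g i \o pi i))%VF.

Let GE v : G v = \sum_(i < r) g i (pi i v).
Proof. by rewrite sum_lfunE; apply: eq_bigr => i _; rewrite comp_lfunE. Qed.

Let pi_sum v : \sum_(i < r) pi i v = v.
Proof. exact: sumv_pi_sum (memvf v). Qed.

Let decomposition_unique (us vs : 'I_r -> F) :
  (forall i, us i \in Fs i) -> (forall i, vs i \in Fs i) ->
  \sum_i us i = \sum_i vs i -> us =1 vs.
Proof.
move=> Fus Fvs /eqP; have /directv_sum_unique uniq_sum := dirF.
rewrite uniq_sum // => /forall_inP eq_uv i.
exact/eqP/eq_uv.
Qed.

Let pi_Fs u (i : 'I_r) : u \in Fs i -> forall m, pi m u = if m == i then u else 0.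
Proof.
move=> Fu; apply: (@decomposition_unique (pi^~ u) (fun m => if m == i then u else 0)).
- by move=> m; rewrite memv_sum_pi.
- by move=> m; case: eqP => [-> // | _]; apply: mem0v.
by rewrite pi_sum (bigD1 i) //= eqxx big1 ?addr0 // => m /negPf ->.
Qed.

Let pi_actF a v (i : 'I_r) : pi i (actF a v) = actF a (pi i v).
Proof.
apply: (@decomposition_unique (pi^~ (actF a v)) (fun m => actF a (pi m v))) => [m | m |].
- exact: memv_sum_pi.
- exact/(Fs_stable (ltn_ord m))/memv_sum_pi.
by rewrite pi_sum -linear_sum /= pi_sum.
Qed.

Let G_Fs u (i : 'I_r) : u \in Fs i -> G u = g i u.
Proof.
move=> Fu; rewrite GE (bigD1 i) //= (pi_Fs Fu) eqxx big1 ?addr0 // => m /negPf nm.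
by rewrite (pi_Fs Fu) nm linear0.
Qed.

Lemma lift_sum_isometry : \dim {:F} = \dim {:E} ->
  exists G : 'Hom(F, E), [/\ lker G == 0%VS, limg G = fullv &
    forall a u v, b (G (actF a u)) (G v) = b (G u) (G (actF (star a) v))].
Proof.
move=> dimFE; have limG : limg G = fullv.
  apply/eqP; rewrite eqEsubv subvf /=; apply: subv_trans g_full _.
  apply/subv_sumP => i _; apply/subvP => _ /memv_imgP[u Fu ->].
  by rewrite -(G_Fs Fu) memv_img ?memvf.
exists G; split=> // [| a u v].
  have := limg_ker_dim G fullv; rewrite limG capfv dimFE -{2}[\dim {:E}]add0n.
  by move/addIn/eqP; rewrite dimv_eq0.
rewrite !GE !linear_sumlz; apply: eq_bigr => i _; rewrite !linear_sumr.
apply: eq_bigr => m _; rewrite !pi_actF.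
exact: (g_compat (ltn_ord i) (ltn_ord m) a (memv_sum_pi _ _ _) (memv_sum_pi _ _ _)).
Qed.

End DirectSumLift.

Lemma hermitian_of_form (k : fieldType) (E : vectType k) (b : E -> E -> k) :
  bilinear_form b -> alternating_bform b \/ symmetric_bform b ->
  exists eps, exists bh : {hermitian E for eps & idfun}, forall x y, bh x y = b x y.
Proof.
case=> bl br alt_or_sym.
have bil : bilinear_for *%R (idfun \; *%R) b by split=> [y|x] c u v; [exact: bl | exact: br].
have [eps herm] : exists eps : bool, forall x y, b x y = (-1) ^+ eps * idfun (b y x).
  case: alt_or_sym => [alt | sym]; [exists true => x y | by exists false => x y; rewrite mul1r sym].
  have bDl x1 x2 z : b (x1 + x2) z = b x1 z + b x2 z.
    by rewrite -[x1]scale1r bl mul1r scale1r.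
  have bDr z y1 y2 : b z (y1 + y2) = b z y1 + b z y2.
    by rewrite -[y1]scale1r br mul1r scale1r.
  have := alt (x + y); rewrite bDl !bDr !alt add0r addr0.
  by move/eqP; rewrite addr_eq0 => /eqP ->; rewrite expr1 mulN1r.
pose bh : {hermitian E for eps & idfun} := HB.pack b
  (bilinear_isBilinear.Build _ _ _ _ _ _ b bil) (isHermitianSesquilinear.Build _ _ _ _ b herm).
by exists eps, bh.
Qed.

Lemma dimv_semisimplification (k : fieldType) (A : algType k) (E F : vectType k)
    (actE : A -> 'End(E)) (actF : A -> 'End(F)) :
  is_semisimplification actE actF -> \dim {:F} = \dim {:E}.
Proof.
case=> r [Es [Fs [phi [[E0 Er _] simple data sumF dirF]]]].
have dim_step i : (i < r)%N -> (\dim (Fs i) + \dim (Es i) = \dim (Es i.+1))%N.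
  move=> ir; have [[sE _ _] [_ img ker _]] := (simple i ir, data i ir).
  suff capK : (Es i.+1 :&: lker (phi i))%VS = Es i by rewrite -img -capK addnC limg_ker_dim.
  apply/vspaceP => x; rewrite memv_cap memv_ker.
  apply/andP/idP => [[Ex /eqP /(ker x Ex)] // | Ex]; have Ex1 := subvP sE _ Ex.
  by split=> //; apply/eqP/(ker x Ex1).
have dim_prefix n : (n <= r)%N -> (\sum_(i < n) \dim (Fs i) = \dim (Es n))%N.
  elim: n => [|n IHn] nr; first by rewrite big_ord0 E0 dimv0.
  by rewrite big_ord_recr /= IHn ?(ltnW nr) // addnC dim_step.
by rewrite -sumF -Er -dim_prefix // (directvP dirF).
Qed.

Lemma semisimplification_isometry (k : fieldType) (A : algType k) (star : A -> A)
    (E : vectType k) (eps : bool) (b : {hermitian E for eps & idfun}) (act : A -> 'End(E))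
    (Ess : vectType k) (actss : A -> 'End(Ess)) :
  (forall x, b x x = 0) \/ (2 != 0 :> k) -> (fullv :&: orthov b fullv = 0)%VS ->
  compatible_on b star act fullv -> is_semisimplification act actss ->
  exists G : 'Hom(Ess, E), [/\ lker G == 0%VS, limg G = fullv &
    forall a u v, b (G (actss a u)) (G v) = b (G u) (G (actss (star a) v))].
Proof.
move=> alt_or_2 nondeg compat Hss.
have [r [Es [Fs [phi [[E0 Er stE] simple data sumF dirF]]]]] := Hss.
have Fs_stable i : (i < r)%N -> submodule actss (Fs i) by case/data.
have datum : filtration_datum b star actss r Fs phi fullv act Es.
  split=> // i ir; right; have [_ img ker phiA] := data i ir; split=> //; exact: simple.
have [g [_ g_active g_compat]] := filtration_lift Fs_stable alt_or_2 datum.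
have g_full : (fullv <= \sum_(i < r) g i @: Fs i)%VS.
  by apply: subv_trans g_active _; apply/subv_sumP => i _; apply: (sumv_sup i).
exact: lift_sum_isometry Fs_stable sumF dirF g_full g_compat (dimv_semisimplification Hss).
Qed.

Theorem theorem4p2p1 (k : fieldType) (A : algType k) (star : A -> A)
    (E : vectType k) (act : A -> 'End(E)) (b : E -> E -> k) :
  involution star -> module_action act ->
  bilinear_form b -> nondegenerate_bform b -> compatible_form act star b ->
  (alternating_bform b \/ (symmetric_bform b /\ (2 \notin [pchar k])%N)) ->
  forall (Ess : vectType k) (actss : A -> 'End(Ess)),
    module_action actss -> is_semisimplification act actss ->
    exists b' : Ess -> Ess -> k,
      [/\ bilinear_form b',
          (symmetric_bform b -> symmetric_bform b'),
          (alternating_bform b -> alternating_bform b'),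
          compatible_form actss star b' &
          forms_isomorphic b b'].
Proof.
move=> _ _ bil [nondeg _] compat alt_or_sym Ess actss _ Hss.
have [eps [bh bhE]] : exists eps, exists bh : {hermitian E for eps & idfun}, bh =2 b.
  by apply: hermitian_of_form bil _; case: alt_or_sym => [| []]; [left | right].
have alt_or_2 : (forall x, bh x x = 0) \/ (2 != 0 :> k).
  by case: alt_or_sym => [alt | [_ two]]; [left => x; rewrite bhE | right; rewrite inE in two].
have nondegV : (fullv :&: orthov bh fullv = 0)%VS.
  apply/eqP; rewrite -subv0; apply/subvP => x; rewrite memv_cap memv0.
  by case/andP=> _ /mem_orthovP x0; apply/eqP/nondeg => y; rewrite -bhE x0 ?memvf.
have compat_bh : compatible_on bh star act fullv by move=> a x y _ _; rewrite !bhE compat.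
have [G [kerG limG G_compat]] := semisimplification_isometry alt_or_2 nondegV compat_bh Hss.
have GVK x : G (G^-1%VF x) = x by rewrite limg_lfunVK ?limG ?memvf.
have [bl br] := bil.
exists (fun u v => b (G u) (G v)); split=> [| sym u v | alt u | a u v |].
- by split=> c x1 x2 y; rewrite linearP /=; [apply: bl | apply: br].
- exact: sym.
- exact: alt.
- by rewrite -!bhE G_compat.
exists G^-1%VF; split=> [| x y]; last by rewrite !GVK.
by exists G => x; rewrite ?GVK ?(lker0_lfunK kerG).
Qed.
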